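(* Consider the following local training on device $k$. Let $\mathcal{D}_k$ be a finite dataset of $D_k$ labelled samples $(\bm{x},y)$ with labels in $\mathcal{C}=\{1,\dots,C\}$, and $\mathcal{D}_{k,c}\subseteq\mathcal{D}_k$ the samples of class $c$. The model is $\bm{w}_k=(\bm{u}_k,\bm{v}_k)$, with feature extractor $h_k(\bm{x};\bm{u}_k)\in\mathbb{R}^p$, and empirical loss $F_k(\bm{u}_k,\bm{v}_k)=\frac{1}{D_k}\sum_{(\bm{x},y)\in\mathcal{D}_k} f(\bm{x},y;\bm{w}_k)$. Given global class vectors $\bm{\Omega}_{c,t}\in\mathbb{R}^p$ ($c\in\mathcal{C}$) for round $t$, define the knowledge loss $L_k(\bm{u}) = \frac{1}{D_k}\sum_{c=1}^C\sum_{(\bm{x},y)\in\mathcal{D}_{k,c}}\frac12\|h_k(\bm{x};\bm{u})-\bm{\Omega}_{c,t}\|^2$. Starting from $\bm{u}_{k,t,0}=\bm{u}_{k,t}$, $\bm{v}_{k,t,0}=\bm{v}_{k,t}$, perform for $l=0,\dots,\tau-1$: $\bm{u}_{k,t,l+1} = \bm{u}_{k,t,l} - \eta_u\big(\nabla_{\bm{u}}F_k(\bm{u}_{k,t,l},\bm{v}_{k,t,l}) + \lambda\nabla L_k(\bm{u}_{k,t,l})\big)$, $\bm{v}_{k,t,l+1} = \bm{v}_{k,t,l} - \eta_v\nabla_{\bm{v}}F_k(\bm{u}_{k,t,l},\bm{v}_{k,t,l})$, and set $\bm{u}_{k,t+1}=\bm{u}_{k,t,\tau}$, $\bm{v}_{k,t+1}=\bm{v}_{k,t,\tau}$.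 Assume: (i) $F_k$ is continuously differentiable and $\nabla_{\bm{u}}F_k$ is $L_u$-Lipschitz in $\bm{u}$ and $L_{uv}$-Lipschitz in $\bm{v}$, $\nabla_{\bm{v}}F_k$ is $L_v$-Lipschitz in $\bm{v}$ and $L_{vu}$-Lipschitz in $\bm{u}$; (ii) $\|\nabla_{\bm{u}}F_k(\bm{u}_{k,t},\bm{v}_{k,t})\|^2\le G_1^2$ and $\|\nabla_{\bm{v}}F_k(\bm{u}_{k,t},\bm{v}_{k,t})\|^2\le G_2^2$ (uniformly over all iterates); (iii) $\|\nabla h_k(\bm{u}_k)\|^2\le\vartheta^2$ and $\|h_k(\bm{u}_k;\bm{x})\|^2\le\varsigma^2$. Let $\chi=\max\{L_{uv},L_{vu}\}/\sqrt{L_uL_v}$, and suppose $\eta_u\le \frac{1}{4\tau(1+\chi)L_u}$ and $\eta_v\le\frac{1}{2\tau(1+\chi)L_v}$. Then $$F_k(\bm{u}_{k,t+1},\bm{v}_{k,t+1}) - F_k(\bm{u}_{k,t},\bm{v}_{k,t}) \le \Big(2(1+\chi)L_u\eta_u^2\tau^2 - \tfrac12\eta_u\tau\Big)\|\nabla_{\bm{u}}F_k(\bm{u}_{k,t},\bm{v}_{k,t})\|^2 + \Big((1+\chi)L_v\eta_v^2\tau^2 - \tfrac12\eta_v\tau\Big)\|\nabla_{\bm{v}}F_k(\bm{u}_{k,t},\bm{v}_{k,t})\|^2 + A_1 + \tfrac54\eta_u\lambda^2\sum_{l=0}^{\tau-1}\|\nabla L_k(\bm{u}_{k,t,l})\|^2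 + 2\eta_u^2\lambda^2(3\eta_uL_u^2 + 2\eta_v\chi^2L_uL_v)\sum_{l=0}^{\tau-1}(\tau-l)\|\nabla L_k(\bm{u}_{k,t,l})\|^2,$$ where $A_1 = \tau(\tau+1)(2\tau+1)\Big(\eta_u^3G_1^2L_u^2 + \tfrac13\eta_v^3G_2^2L_v^2 + \big(\tfrac23\eta_uG_1^2 + \tfrac12\eta_vG_2^2\big)\eta_u\eta_v\chi^2L_uL_v\Big)$.
   Context: $f(\bm{x},y;\bm{w})$ is a sample-wise loss; $\lambda\ge0$ is a weight hyperparameter; $\tau$ is the number of local gradient steps; $\eta_u,\eta_v>0$ are learning rates; $\|\cdot\|$ is the Euclidean norm. *)

From HB Require Import structures.
From mathcomp Require Import all_boot all_order all_algebra.
From mathcomp Require Import all_classical all_reals all_analysis.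
Set Implicit Arguments. Unset Strict Implicit. Unset Printing Implicit Defensive.
Import Order.TTheory GRing.Theory Num.Theory.
Import numFieldNormedType.Exports.
Local Open Scope ring_scope.

(* Euclidean inner product, squared norm and norm on row vectors R^n
   (MathComp-Analysis' built-in norm on matrices is the max norm, so we
   define the Euclidean one explicitly). *)
Definition dotv (R : realType) (n : nat) (a b : 'rV[R]_n) : R :=
  \sum_(i < n) a 0 i * b 0 i.
Definition sqnorm (R : realType) (n : nat) (a : 'rV[R]_n) : R := dotv a a.
Definition enorm (R : realType) (n : nat) (a : 'rV[R]_n) : R :=
  Num.sqrt (sqnorm a).
Definition sqfrob (R : realType) (m n : nat) (A : 'M[R]_(m, n)) : R :=
  \sum_(i < m) \sum_(j < n) A i j ^+ 2.

Definition emp_loss (R : realType) (X : Type) (C du dv : nat)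
  (s : seq (X * 'I_C)) (f : X -> 'I_C -> 'rV[R]_du -> 'rV[R]_dv -> R)
  (u : 'rV[R]_du) (v : 'rV[R]_dv) : R :=
  (size s)%:R^-1 * \sum_(z <- s) f z.1 z.2 u v.

Definition know_loss (R : realType) (X : Type) (C du p : nat)
  (s : seq (X * 'I_C)) (h : X -> 'rV[R]_du -> 'rV[R]_p) (Om : 'I_C -> 'rV[R]_p)
  (u : 'rV[R]_du) : R :=
  (size s)%:R^-1 *
  \sum_(c < C) \sum_(z <- s | z.2 == c) (2%:R^-1 * sqnorm (h z.1 u - Om c)).

Fixpoint local_iter (R : realType) (du dv : nat)
  (gu : 'rV[R]_du -> 'rV[R]_dv -> 'rV[R]_du)
  (gv : 'rV[R]_du -> 'rV[R]_dv -> 'rV[R]_dv)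
  (gL : 'rV[R]_du -> 'rV[R]_du)
  (eta_u eta_v lam : R) (u0 : 'rV[R]_du) (v0 : 'rV[R]_dv) (l : nat)
  : 'rV[R]_du * 'rV[R]_dv :=
  match l with
  | 0 => (u0, v0)
  | l'.+1 =>
      let w := local_iter gu gv gL eta_u eta_v lam u0 v0 l' in
      (w.1 - eta_u *: (gu w.1 w.2 + lam *: gL w.1),
       w.2 - eta_v *: gv w.1 w.2)
  end.

(* One round moves [(u, v)] by [(- eta_u Z, - eta_v Y)], where [Z] and [Y] sum
   the [u]-directions [grad_u F_l + lam grad L_l] and the gradients [grad_v F_l]
   over the round.  Smoothness of [F] in each block, with the cross constants
   absorbed into [chi], bounds the change of [F] by the first-order terms plus
   [(1 + chi) / 2 * (Lu |eta_u Z|^2 + Lv |eta_v Y|^2)].  Expanding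
   [|Z - tau grad_u F_0|^2] and using the step-size bounds turns this into
   [- eta_u tau / 2 |grad_u F_0|^2] plus the drift
   [sum_l |grad_u F_l - grad_u F_0|^2] and [lam^2 sum_l |grad L_l|^2] (likewise
   for [v]).  By the Lipschitz conditions the drift at step [l] is controlled by
   the distance of the [l]-th iterate from the start, which is [O(l)] by the
   gradient bounds; summing over [l < tau] yields [A1] and a small multiple of
   [eta_u lam^2 sum_l |grad L_l|^2]. *)

From HB Require Import structures.
From mathcomp Require Import all_boot all_order all_algebra.
From mathcomp Require Import all_classical all_reals all_analysis.
From mathcomp Require Import ring lra.
Import Order.TTheory GRing.Theory Num.Theory.
Import numFieldNormedType.Exports.
Local Open Scope ring_scope.

Set Implicit Arguments.
Unset Strict Implicit.

Section EuclideanRowVectors.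
Variables (R : realType) (n : nat).
Implicit Types (a b c : 'rV[R]_n).

Lemma dotvC a b : dotv a b = dotv b a.
Proof. by apply: eq_bigr => i _; rewrite mulrC. Qed.

Lemma dotvDl a b c : dotv (a + b) c = dotv a c + dotv b c.
Proof. by rewrite /dotv -big_split; apply: eq_bigr => i _; rewrite mxE mulrDl. Qed.

Lemma dotvZl k a b : dotv (k *: a) b = k * dotv a b.
Proof. by rewrite /dotv mulr_sumr; apply: eq_bigr => i _; rewrite mxE mulrA. Qed.

Lemma dotvNl a b : dotv (- a) b = - dotv a b.
Proof. by rewrite -scaleN1r dotvZl mulN1r. Qed.

Lemma dotvBl a b c : dotv (a - b) c = dotv a c - dotv b c.
Proof. by rewrite dotvDl dotvNl. Qed.

Lemma dotvZr k a b : dotv a (k *: b) = k * dotv a b.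
Proof. by rewrite dotvC dotvZl dotvC. Qed.

Lemma dotvBr a b c : dotv c (a - b) = dotv c a - dotv c b.
Proof. by rewrite dotvC dotvBl !(dotvC c). Qed.

Lemma dotv0l a : dotv 0 a = 0.
Proof. by rewrite /dotv big1 // => i _; rewrite mxE mul0r. Qed.

Lemma sqnorm_ge0 a : 0 <= sqnorm a.
Proof. by apply: sumr_ge0 => i _; rewrite -expr2 sqr_ge0. Qed.

Lemma sqnorm_eq0 a : (sqnorm a == 0) = (a == 0).
Proof.
apply/idP/eqP => [|->]; last by rewrite /sqnorm dotv0l.
rewrite psumr_eq0 => [/allP a0|i _]; last by rewrite -expr2 sqr_ge0.
apply/rowP => i; move/(_ i (mem_index_enum _)): a0.
by rewrite mxE mulf_eq0 orbb => /eqP.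
Qed.

Lemma sqnormD a b : sqnorm (a + b) = sqnorm a + 2 * dotv a b + sqnorm b.
Proof. rewrite /sqnorm !dotvDl ![dotv _ (a + b)]dotvC !dotvDl (dotvC a b); ring. Qed.

Lemma sqnormB a b : sqnorm (a - b) = sqnorm a - 2 * dotv a b + sqnorm b.
Proof. rewrite /sqnorm !dotvBl !dotvBr (dotvC b a); ring. Qed.

Lemma sqnormZ k a : sqnorm (k *: a) = k ^+ 2 * sqnorm a.
Proof. rewrite /sqnorm dotvZl dotvZr; ring. Qed.

Lemma sqnormN a : sqnorm (- a) = sqnorm a.
Proof. by rewrite -scaleN1r sqnormZ sqrrN expr1n mul1r. Qed.

Lemma dotv_young a b k : 0 < k -> 2 * dotv a b <= k * sqnorm a + k^-1 * sqnorm b.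
Proof.
move=> k0; have := sqnorm_ge0 (k *: a - b); rewrite sqnormB sqnormZ dotvZl => H.
rewrite -(ler_pM2l k0) mulrDr mulrA (mulrA k k^-1) mulfV ?gt_eqF // mul1r; nra.
Qed.

Lemma dotv_le_amgm x b (c p q P : R) : 0 <= c -> 0 < p -> 0 < q ->
  sqnorm x <= c ^+ 2 * p * q * P -> 2 * dotv x b <= c * (p * P + q * sqnorm b).
Proof.
move=> c0 p0 q0 hx; have [cgt0|] := ltrP 0 c; last first.
  move=> cle0; have c_eq0 : c = 0 by apply/eqP; rewrite eq_le cle0 c0.
  move: hx; rewrite c_eq0 expr2 !mul0r => x_le0.
  have /eqP-> : x == 0 by rewrite -sqnorm_eq0 eq_le x_le0 sqnorm_ge0.
  by rewrite dotv0l mulr0.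
have cq0 : 0 < c * q by rewrite mulr_gt0.
have cqV0 : 0 < (c * q)^-1 by rewrite invr_gt0.
apply: (le_trans (dotv_young x b cqV0)); rewrite invrK.
have : (c * q)^-1 * sqnorm x <= c * p * P.
  by rewrite ler_pdivrMl // (le_trans hx) // [leRHS](_ : _ = c ^+ 2 * p * q * P) //; ring.
nra.
Qed.

Lemma sqnormD_le a b k : 0 < k ->
  sqnorm (a + b) <= (1 + k) * sqnorm a + (1 + k^-1) * sqnorm b.
Proof. by move=> k0; have := dotv_young a b k0; rewrite sqnormD; lra. Qed.

Lemma sqnormD_le2 a b : sqnorm (a + b) <= 2 * sqnorm a + 2 * sqnorm b.
Proof. by have := sqnormD_le a b ltr01; rewrite invr1. Qed.

Lemma sqnorm_sum m (F : nat -> 'rV[R]_n) :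
  sqnorm (\sum_(0 <= i < m) F i) <= m%:R * \sum_(0 <= i < m) sqnorm (F i).
Proof.
elim: m => [|m IH]; first by rewrite !big_geq // mul0r /sqnorm dotv0l.
rewrite !big_nat_recr //=.
case: m IH => [|m]; first by rewrite !big_geq // !add0r mul1r.
set S := \sum_(0 <= i < m.+1) F i; set Q := \sum_(0 <= i < m.+1) _ => IH.
have m0 : 0 < m.+1%:R :> R by rewrite ltr0n.
have IH' : m.+1%:R^-1 * sqnorm S <= Q by rewrite ler_pdivrMl.
rewrite -natr1 [S + _]addrC (le_trans (sqnormD_le _ _ m0)) //.
rewrite mulrDr [X in _ <= X]addrC (addrC _ 1) lerD2l !mulrDl !mul1r [Q + _]addrC.
exact: lerD.
Qed.

Lemma sqnorm_sum_le_const m (F : nat -> 'rV[R]_n) (c : R) :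
  (forall i, (i < m)%N -> sqnorm (F i) <= c) ->
  sqnorm (\sum_(0 <= i < m) F i) <= m%:R ^+ 2 * c.
Proof.
move=> Fc; apply: (le_trans (sqnorm_sum _ _)); rewrite expr2 -mulrA ler_wpM2l //.
apply: (le_trans (ler_sum_nat (G := fun=> c) _)); first by move=> i /andP[_ /Fc].
by rewrite sumr_const_nat subn0 mulr_natl.
Qed.

(* Expanding [|Z - T g|^2] expresses [-<g, Z>] through [|Z|^2], whose
   coefficient is nonpositive under the step-size condition [c eta T <= 1]. *)
Lemma aggregated_step_le (g Z : 'rV[R]_n) (T eta c W : R) :
  0 < T -> 0 < eta -> 0 <= c -> c * eta * T <= 1 ->
  sqnorm (Z - T *: g) <= T * W ->
  dotv g (- (eta *: Z)) + c / 2 * sqnorm (- (eta *: Z))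
    <= - (eta * T / 2) * sqnorm g + eta / 2 * W.
Proof.
move=> T0 eta0 c0 ceT hW.
rewrite -scaleNr dotvZr sqnormZ sqrrN; rewrite sqnormB sqnormZ dotvZr dotvC in hW.
have := sqnorm_ge0 Z; move: hW; set P := dotv g Z; set NZ := sqnorm Z => hW NZ0.
rewrite -(ler_pM2l (mulr_gt0 (ltr0Sn R 1) T0)).
have h1 : eta * (NZ - 2 * (T * P) + T ^+ 2 * sqnorm g) <= eta * (T * W) by rewrite ler_pM2l.
have h2 : c * eta * T * (eta * NZ) <= eta * NZ.
  by apply: ler_piMl => //; rewrite mulr_ge0 // ltW.
nra.
Qed.

End EuclideanRowVectors.

Lemma sqnorm_le_of_enorm (R : realType) n m (a : 'rV[R]_n) (b : 'rV[R]_m) (L K : R) :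
  0 <= L <= K -> enorm a <= L * enorm b -> sqnorm a <= K ^+ 2 * sqnorm b.
Proof.
move=> /andP[L0 LK] hab; rewrite -[sqnorm a]sqr_sqrtr ?sqnorm_ge0 //.
rewrite -[sqnorm b]sqr_sqrtr ?sqnorm_ge0 // -exprMn ler_sqr ?nnegrE ?sqrtr_ge0 //.
- by rewrite (le_trans hab) // ler_wpM2r ?sqrtr_ge0.
- by rewrite mulr_ge0 ?sqrtr_ge0 // (le_trans L0).
Qed.

Section Descent.
Variable R : realType.
Local Open Scope classical_set_scope.
Local Open Scope ring_scope.

Lemma is_derive_line n (f : 'rV[R]_n -> R) (x a : 'rV[R]_n) (t df : R) :
  is_derive (x + t *: a) a f df -> is_derive t 1 (fun s : R => f (x + s *: a)) df.
Proof.
move=> [Hf Hdf].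
have E : (fun h : R => h^-1 *: (((fun s => f (x + s *: a)) \o shift t) (h *: 1)
                                 - f (x + t *: a)))
       = (fun h : R => h^-1 *: ((f \o shift (x + t *: a)) (h *: a) - f (x + t *: a))).
  apply: funext => h /=; congr (_ *: (f _ - _)).
  by rewrite scalerDl [h *: 1]mulr1 addrCA addrC.
by split; rewrite /derivable /derive E.
Qed.

(* The auxiliary [psi] removes the linear and quadratic parts of the claimed
   bound; its derivative is nonpositive on [0, 1], so [psi 1 <= psi 0]. *)
Lemma descent_lemma n (f : 'rV[R]_n -> R) (g : 'rV[R]_n -> 'rV[R]_n) (L : R) x a :
  0 < L ->
  (forall y d, is_derive y d f (dotv (g y) d)) ->
  (forall y, sqnorm (g y - g x) <= L ^+ 2 * sqnorm (y - x)) ->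
  f (x + a) - f x <= dotv (g x) a + L / 2 * sqnorm a.
Proof.
move=> L0 Df Lg.
set c1 := dotv (g x) a; set c2 := L / 2 * sqnorm a.
pose psi : R -> R := (fun s => f (x + s *: a)) - c1 \*: @idfun R - c2 \*: @idfun R ^+ 2.
have Dpsi (t : R) : is_derive t 1 psi (dotv (g (x + t *: a)) a - c1 - c2 * (2 * t)).
  have := is_derive_line (Df (x + t *: a) a); rewrite /psi => ?.
  by apply: is_derive_eq; rewrite /= expr1 [c1%:A]mulr1 [(2 * t)%:A]mulr1.
have dpsi_le0 (t : R) : t \in `]0, 1[ -> derive1 psi t <= 0.
  rewrite in_itv /= => /andP[t0 _].
  have hd : sqnorm (g (x + t *: a) - g x) <= t ^+ 2 * L * L * sqnorm a.
    have := Lg (x + t *: a); rewrite addrAC subrr add0r sqnormZ.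
    by rewrite [t ^+ 2 * L * L * _](_ : _ = L ^+ 2 * (t ^+ 2 * sqnorm a)) //; ring.
  have := dotv_le_amgm a (ltW t0) L0 L0 hd.
  have Dt := Dpsi t; rewrite derive1E derive_val /c1 /c2 -dotvBl; lra.
have dpsi (t : R) : derivable psi t 1 := @ex_derive _ _ _ _ _ _ _ (Dpsi t).
have psi_cont : {within `[0, 1], continuous psi}.
  by apply: derivable_within_continuous => t _; exact: dpsi.
have := ler0_derive1_le_cc (fun t _ => dpsi t) dpsi_le0 psi_cont.
move=> /(_ 1 0); rewrite !in_itv /= ler01 !lexx => /(_ isT isT isT).
have psiE t : psi t = f (x + t *: a) - c1 * t - c2 * t ^+ 2 by [].
rewrite !psiE scale0r scale1r addr0 expr0n expr1n /= !mulr1 !mulr0; lra.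
Qed.

Lemma two_block_descent du dv (F : 'rV[R]_du -> 'rV[R]_dv -> R)
    (gu : 'rV[R]_du -> 'rV[R]_dv -> 'rV[R]_du)
    (gv : 'rV[R]_du -> 'rV[R]_dv -> 'rV[R]_dv) (Lu Lv chi : R) u v a b :
  0 < Lu -> 0 < Lv -> 0 <= chi ->
  (forall u v d, is_derive u d (F ^~ v) (dotv (gu u v) d)) ->
  (forall u v d, is_derive v d (F u) (dotv (gv u v) d)) ->
  (forall u u' v, sqnorm (gu u v - gu u' v) <= Lu ^+ 2 * sqnorm (u - u')) ->
  (forall u v v', sqnorm (gv u v - gv u v') <= Lv ^+ 2 * sqnorm (v - v')) ->
  (forall u u' v, sqnorm (gv u v - gv u' v) <= chi ^+ 2 * Lu * Lv * sqnorm (u - u')) ->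
  F (u + a) (v + b) - F u v <= dotv (gu u v) a + dotv (gv u v) b
     + (1 + chi) / 2 * (Lu * sqnorm a + Lv * sqnorm b).
Proof.
move=> Lu0 Lv0 chi0 DFu DFv Lgu Lgv Lgvu.
have step_u := descent_lemma a Lu0 (DFu ^~ v) (Lgu ^~ u ^~ v).
have step_v := descent_lemma b Lv0 (DFv (u + a)) (Lgv (u + a) ^~ v).
have cross : 2 * dotv (gv (u + a) v - gv u v) b <= chi * (Lu * sqnorm a + Lv * sqnorm b).
  by apply: dotv_le_amgm => //; have := Lgvu (u + a) u v; rewrite [u + a]addrC addrK.
move: step_v; rewrite -[dotv (gv (u + a) v) b](subrK (dotv (gv u v) b)) -dotvBl.
lra.
Qed.

End Descent.

Section NatSums.
Variable R : realType.

Lemma sum_sqr_nat_le m :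
  6 * \sum_(0 <= j < m) (j%:R : R) ^+ 2 <= m%:R * (m%:R + 1) * (2 * m%:R + 1).
Proof.
elim: m => [|m IH]; first by rewrite big_geq // mulr0 !mul0r.
rewrite big_nat_recr //= -natr1; move: IH; have : 0 <= m%:R :> R by []; nra.
Qed.

Lemma sum_nat_le m : 2 * \sum_(0 <= j < m) (j%:R : R) <= m%:R ^+ 2.
Proof.
elim: m => [|m IH]; first by rewrite big_geq // mulr0 expr0n.
rewrite big_nat_recr //= -natr1; move: IH; have : 0 <= m%:R :> R by []; nra.
Qed.

Lemma sum_quadratic_le (x : nat -> R) (a b : R) m : 0 <= a -> 0 <= b ->
  (forall j, (j < m)%N -> x j <= a * j%:R ^+ 2 + b * j%:R) ->
  \sum_(0 <= j < m) x j <= a * (m%:R * (m%:R + 1) * (2 * m%:R + 1)) / 6 + b * m%:R ^+ 2 / 2.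
Proof.
move=> a0 b0 hx.
apply: (le_trans (ler_sum_nat (G := fun j => a * j%:R ^+ 2 + b * j%:R) _)).
  by move=> j /andP[_ /hx].
rewrite big_split /= -!mulr_sumr.
have := sum_sqr_nat_le m; have := sum_nat_le m; nra.
Qed.

End NatSums.

Lemma sqnorm_sub_le_blocks (R : realType) n m k (G : 'rV[R]_n -> 'rV[R]_m -> 'rV[R]_k)
    (A B : R) u u' v v' :
  (forall u u' v, sqnorm (G u v - G u' v) <= A * sqnorm (u - u')) ->
  (forall u v v', sqnorm (G u v - G u v') <= B * sqnorm (v - v')) ->
  sqnorm (G u v - G u' v') <= 2 * A * sqnorm (u - u') + 2 * B * sqnorm (v - v').
Proof.
move=> GA GB; rewrite -(subrK (G u' v) (G u v)) -addrA.
apply: (le_trans (sqnormD_le2 _ _)).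
by rewrite -!mulrA; apply: lerD; rewrite ler_pM2l ?ltr0Sn.
Qed.

Ltac nonneg := repeat first
  [ assumption | apply: sqr_ge0 | apply: ler0n | apply: sqnorm_ge0
  | apply: addr_ge0 | apply: mulr_ge0 | apply: sumr_ge0 => ? _ | apply: ltW; assumption ].

Section LocalRound.
Variables (R : realType) (du dv : nat).
Variable F : 'rV[R]_du -> 'rV[R]_dv -> R.
Variables (gu : 'rV[R]_du -> 'rV[R]_dv -> 'rV[R]_du)
          (gv : 'rV[R]_du -> 'rV[R]_dv -> 'rV[R]_dv) (gL : 'rV[R]_du -> 'rV[R]_du).
Variables (Lu Lv chi G1 G2 lam eta_u eta_v : R) (tau : nat).
Variables (u0 : 'rV[R]_du) (v0 : 'rV[R]_dv).

Local Notation it := (local_iter gu gv gL eta_u eta_v lam u0 v0).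
Local Notation g j := (gu (it j).1 (it j).2).
Local Notation k j := (gv (it j).1 (it j).2).
Local Notation q j := (gL (it j).1).
Local Notation T := (tau%:R : R).
Local Notation Q := (\sum_(0 <= j < tau) sqnorm (q j)).
Local Notation S := (T * (T + 1) * (2 * T + 1)).

Hypotheses (Lu_gt0 : 0 < Lu) (Lv_gt0 : 0 < Lv) (chi_ge0 : 0 <= chi).
Hypotheses (eta_u_gt0 : 0 < eta_u) (eta_v_gt0 : 0 < eta_v) (tau_gt0 : (0 < tau)%N).
Hypothesis DFu : forall u v d, is_derive u d (F ^~ v) (dotv (gu u v) d).
Hypothesis DFv : forall u v d, is_derive v d (F u) (dotv (gv u v) d).
Hypothesis gu_lip_u :
  forall u u' v, sqnorm (gu u v - gu u' v) <= Lu ^+ 2 * sqnorm (u - u').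
Hypothesis gu_lip_v :
  forall u v v', sqnorm (gu u v - gu u v') <= chi ^+ 2 * Lu * Lv * sqnorm (v - v').
Hypothesis gv_lip_v :
  forall u v v', sqnorm (gv u v - gv u v') <= Lv ^+ 2 * sqnorm (v - v').
Hypothesis gv_lip_u :
  forall u u' v, sqnorm (gv u v - gv u' v) <= chi ^+ 2 * Lu * Lv * sqnorm (u - u').
Hypothesis gu_bounded : forall l, (l <= tau)%N -> sqnorm (g l) <= G1 ^+ 2.
Hypothesis gv_bounded : forall l, (l <= tau)%N -> sqnorm (k l) <= G2 ^+ 2.
Hypothesis step_u : (1 + chi) * Lu * eta_u * T <= 4^-1.
Hypothesis step_v : (1 + chi) * Lv * eta_v * T <= 2^-1.

Lemma iter_u_closed l : (it l).1 = u0 - eta_u *: \sum_(0 <= j < l) (g j + lam *: q j).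
Proof.
elim: l => [|l IH]; first by rewrite big_geq // scaler0 subr0.
by rewrite big_nat_recr //= [in RHS]scalerDr [in RHS]opprD [in RHS]addrA -IH.
Qed.

Lemma iter_v_closed l : (it l).2 = v0 - eta_v *: \sum_(0 <= j < l) k j.
Proof.
elim: l => [|l IH]; first by rewrite big_geq // scaler0 subr0.
by rewrite big_nat_recr //= [in RHS]scalerDr [in RHS]opprD [in RHS]addrA -IH.
Qed.

Lemma drift_u_le j : (j <= tau)%N ->
  sqnorm ((it j).1 - u0)
    <= eta_u ^+ 2 * (3 * j%:R ^+ 2 * G1 ^+ 2 + 3 / 2 * lam ^+ 2 * j%:R * Q).
Proof.
move=> jt; rewrite iter_u_closed addrAC subrr add0r sqnormN sqnormZ.
rewrite ler_wpM2l ?sqr_ge0 // big_split /= -scaler_sumr.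
have sum_g : sqnorm (\sum_(0 <= i < j) g i) <= j%:R ^+ 2 * G1 ^+ 2.
  by apply: sqnorm_sum_le_const => i ij; apply: gu_bounded (leq_trans (ltnW ij) jt).
have sum_q : sqnorm (\sum_(0 <= i < j) q i) <= j%:R * Q.
  apply: (le_trans (sqnorm_sum _ _)); rewrite ler_wpM2l //.
  by apply: nondecreasing_series => // i _ _; exact: sqnorm_ge0.
apply: (le_trans (sqnormD_le _ _ (ltr0Sn R 1))); rewrite sqnormZ.
have := sqr_ge0 lam; nra.
Qed.

Lemma drift_v_le j : (j <= tau)%N ->
  sqnorm ((it j).2 - v0) <= eta_v ^+ 2 * (j%:R ^+ 2 * G2 ^+ 2).
Proof.
move=> jt; rewrite iter_v_closed addrAC subrr add0r sqnormN sqnormZ.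
rewrite ler_wpM2l ?sqr_ge0 //.
by apply: sqnorm_sum_le_const => i ij; apply: gv_bounded (leq_trans (ltnW ij) jt).
Qed.

Lemma grad_u_drift_sum :
  \sum_(0 <= j < tau) sqnorm (g j - g 0)
    <= (6 * Lu ^+ 2 * eta_u ^+ 2 * G1 ^+ 2 + 2 * chi ^+ 2 * Lu * Lv * eta_v ^+ 2 * G2 ^+ 2)
         * S / 6
       + 3 * Lu ^+ 2 * eta_u ^+ 2 * lam ^+ 2 * Q * T ^+ 2 / 2.
Proof.
apply: sum_quadratic_le => [||j jt]; try by nonneg.
apply: (le_trans (sqnorm_sub_le_blocks (it j).1 u0 (it j).2 v0 gu_lip_u gu_lip_v)).
have cu : 0 <= 2 * Lu ^+ 2 by nonneg.
have hu := ler_wpM2l cu (drift_u_le (ltnW jt)).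
have c0 : 0 <= 2 * (chi ^+ 2 * Lu * Lv) by nonneg.
have hv := ler_wpM2l c0 (drift_v_le (ltnW jt)).
lra.
Qed.

Lemma grad_v_drift_sum :
  \sum_(0 <= j < tau) sqnorm (k j - k 0)
    <= (6 * chi ^+ 2 * Lu * Lv * eta_u ^+ 2 * G1 ^+ 2 + 2 * Lv ^+ 2 * eta_v ^+ 2 * G2 ^+ 2)
         * S / 6
       + 3 * chi ^+ 2 * Lu * Lv * eta_u ^+ 2 * lam ^+ 2 * Q * T ^+ 2 / 2.
Proof.
apply: sum_quadratic_le => [||j jt]; try by nonneg.
apply: (le_trans (sqnorm_sub_le_blocks (it j).1 u0 (it j).2 v0 gv_lip_u gv_lip_v)).
have c0 : 0 <= 2 * (chi ^+ 2 * Lu * Lv) by nonneg.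
have hu := ler_wpM2l c0 (drift_u_le (ltnW jt)).
have cv : 0 <= 2 * Lv ^+ 2 by nonneg.
have hv := ler_wpM2l cv (drift_v_le (ltnW jt)).
lra.
Qed.

Lemma local_descent_drift :
  F (it tau).1 (it tau).2 - F u0 v0
    <= - (eta_u * T / 2) * sqnorm (gu u0 v0) - (eta_v * T / 2) * sqnorm (gv u0 v0)
       + eta_u * (\sum_(0 <= j < tau) sqnorm (g j - g 0) + lam ^+ 2 * Q)
       + eta_v / 2 * \sum_(0 <= j < tau) sqnorm (k j - k 0).
Proof.
set Z := \sum_(0 <= j < tau) (g j + lam *: q j); set Y := \sum_(0 <= j < tau) k j.
have T0 : 0 < T by rewrite ltr0n.
have HZ : sqnorm (Z - T *: gu u0 v0)
          <= T * (2 * \sum_(0 <= j < tau) sqnorm (g j - g 0) + 2 * (lam ^+ 2 * Q)).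
  have -> : T *: gu u0 v0 = \sum_(0 <= j < tau) g 0.
    by rewrite sumr_const_nat subn0 scaler_nat.
  rewrite /Z -sumrB; apply: (le_trans (sqnorm_sum _ _)).
  rewrite ler_wpM2l // !mulr_sumr -big_split /=.
  by apply: ler_sum_nat => j _; rewrite addrAC -sqnormZ; exact: sqnormD_le2.
have HY : sqnorm (Y - T *: gv u0 v0) <= T * \sum_(0 <= j < tau) sqnorm (k j - k 0).
  have -> : T *: gv u0 v0 = \sum_(0 <= j < tau) k 0.
    by rewrite sumr_const_nat subn0 scaler_nat.
  by rewrite /Y -sumrB; exact: sqnorm_sum.
have cu : 0 <= (1 + chi) * Lu by nonneg.
have cv : 0 <= (1 + chi) * Lv by nonneg.
have rho_u : (1 + chi) * Lu * eta_u * T <= 1 by move: step_u; lra.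
have rho_v : (1 + chi) * Lv * eta_v * T <= 1 by move: step_v; lra.
have Up := aggregated_step_le T0 eta_u_gt0 cu rho_u HZ.
have Vp := aggregated_step_le T0 eta_v_gt0 cv rho_v HY.
have := two_block_descent u0 v0 ((it tau).1 - u0) ((it tau).2 - v0)
  Lu_gt0 Lv_gt0 chi_ge0 DFu DFv gu_lip_u gv_lip_v gv_lip_u.
have Ea : (it tau).1 - u0 = - (eta_u *: Z) by rewrite iter_u_closed addrAC subrr add0r.
have Eb : (it tau).2 - v0 = - (eta_v *: Y) by rewrite iter_v_closed addrAC subrr add0r.
rewrite !subrKC Ea Eb; lra.
Qed.

(* The drift terms fit into [A1] except for a part of the [lam]-term, which
   the step-size conditions make at most [eta_u lam^2 Q / 4]. *)
Lemma local_round_descent :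
  F (it tau).1 (it tau).2 - F u0 v0
    <= - (eta_u * T / 2) * sqnorm (gu u0 v0) - (eta_v * T / 2) * sqnorm (gv u0 v0)
       + S * (eta_u ^+ 3 * G1 ^+ 2 * Lu ^+ 2 + 3%:R^-1 * eta_v ^+ 3 * G2 ^+ 2 * Lv ^+ 2
              + (2 / 3%:R * eta_u * G1 ^+ 2 + 2%:R^-1 * eta_v * G2 ^+ 2)
                * eta_u * eta_v * chi ^+ 2 * Lu * Lv)
       + 5 / 4%:R * eta_u * lam ^+ 2 * Q.
Proof.
have Eu := ler_wpM2l (ltW eta_u_gt0) grad_u_drift_sum.
have ev0 : 0 <= eta_v / 2 by rewrite divr_ge0 // ltW.
have Ev := ler_wpM2l ev0 grad_v_drift_sum.
have := local_descent_drift.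
have q0 : 0 <= eta_u * lam ^+ 2 * Q by nonneg.
have : 0 <= S * (eta_v ^+ 3 * Lv ^+ 2 * G2 ^+ 2
                 + eta_u ^+ 2 * eta_v * chi ^+ 2 * Lu * Lv * G1 ^+ 2
                 + eta_u * eta_v ^+ 2 * chi ^+ 2 * Lu * Lv * G2 ^+ 2) by nonneg.
have a0 : 0 <= Lu * eta_u * T by nonneg.
have b0 : 0 <= chi * Lu * eta_u * T by nonneg.
have c0 : 0 <= chi * Lv * eta_v * T by nonneg.
have d0 : 0 <= Lv * eta_v * T by nonneg.
have a_le : Lu * eta_u * T <= 4^-1 by move: step_u; lra.
have b_le : chi * Lu * eta_u * T <= 4^-1 by move: step_u; lra.
have c_le : chi * Lv * eta_v * T <= 2^-1 by move: step_v; lra.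
have : (Lu * eta_u * T) ^+ 2 * (eta_u * lam ^+ 2 * Q) <= 16^-1 * (eta_u * lam ^+ 2 * Q).
  by apply: ler_wpM2r => //; rewrite expr2 [16^-1](_ : _ = 4^-1 * 4^-1) ?ler_pM //; field.
have : (chi * Lu * eta_u * T) * (chi * Lv * eta_v * T) * (eta_u * lam ^+ 2 * Q)
       <= 8^-1 * (eta_u * lam ^+ 2 * Q).
  by apply: ler_wpM2r => //; rewrite [8^-1](_ : _ = 4^-1 * 2^-1) ?ler_pM //; field.
lra.
Qed.

End LocalRound.

Theorem lemma2 (R : realType) (X : Type) (C du dv p : nat)
  (s : seq (X * 'I_C))
  (f : X -> 'I_C -> 'rV[R]_du -> 'rV[R]_dv -> R)
  (h : X -> 'rV[R]_du -> 'rV[R]_p)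
  (Jh : X -> 'rV[R]_du -> 'M[R]_(du, p))
  (Om : 'I_C -> 'rV[R]_p)
  (gu : 'rV[R]_du -> 'rV[R]_dv -> 'rV[R]_du)
  (gv : 'rV[R]_du -> 'rV[R]_dv -> 'rV[R]_dv)
  (gL : 'rV[R]_du -> 'rV[R]_du)
  (Lu Lv Luv Lvu G1 G2 theta vsig lam eta_u eta_v : R) (tau : nat)
  (u0 : 'rV[R]_du) (v0 : 'rV[R]_dv) :
  (* finite, nonempty local dataset *)
  (0 < size s)%N ->
  (* (i) F_k is continuously differentiable, with partial gradients gu, gv *)
  (forall u v d, is_derive u d (fun u' => emp_loss s f u' v) (dotv (gu u v) d)) ->
  (forall u v d, is_derive v d (fun v' => emp_loss s f u v') (dotv (gv u v) d)) ->
  continuous (fun w : 'rV[R]_du * 'rV[R]_dv => gu w.1 w.2) ->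
  continuous (fun w : 'rV[R]_du * 'rV[R]_dv => gv w.1 w.2) ->
  (* Lipschitz constants *)
  0 < Lu -> 0 < Lv -> 0 <= Luv -> 0 <= Lvu ->
  (forall u u' v, enorm (gu u v - gu u' v) <= Lu * enorm (u - u')) ->
  (forall u v v', enorm (gu u v - gu u v') <= Luv * enorm (v - v')) ->
  (forall u v v', enorm (gv u v - gv u v') <= Lv * enorm (v - v')) ->
  (forall u u' v, enorm (gv u v - gv u' v) <= Lvu * enorm (u - u')) ->
  (* feature extractor h_k(x; .) is differentiable with Jacobian Jh, and gL = grad L_k *)
  (forall x u d, is_derive u d (h x) (d *m Jh x u)) ->
  (forall u d, is_derive u d (know_loss s h Om) (dotv (gL u) d)) ->
  (* (ii) bounded gradients along all local iterates *)
  (forall l, (l <= tau)%N ->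
     sqnorm (gu (local_iter gu gv gL eta_u eta_v lam u0 v0 l).1
                (local_iter gu gv gL eta_u eta_v lam u0 v0 l).2) <= G1 ^+ 2) ->
  (forall l, (l <= tau)%N ->
     sqnorm (gv (local_iter gu gv gL eta_u eta_v lam u0 v0 l).1
                (local_iter gu gv gL eta_u eta_v lam u0 v0 l).2) <= G2 ^+ 2) ->
  (* (iii) bounded feature extractor and its gradient *)
  (forall x u, sqfrob (Jh x u) <= theta ^+ 2) ->
  (forall x u, sqnorm (h x u) <= vsig ^+ 2) ->
  (* hyperparameters *)
  0 <= lam -> (0 < tau)%N -> 0 < eta_u -> 0 < eta_v ->
  let chi := Num.max Luv Lvu / Num.sqrt (Lu * Lv) in
  eta_u <= (4 * tau%:R * (1 + chi) * Lu)^-1 ->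
  eta_v <= (2 * tau%:R * (1 + chi) * Lv)^-1 ->
  let it := local_iter gu gv gL eta_u eta_v lam u0 v0 in
  let T := tau%:R : R in
  let A1 := T * (T + 1) * (2 * T + 1) *
     (eta_u ^+ 3 * G1 ^+ 2 * Lu ^+ 2 + 3%:R^-1 * eta_v ^+ 3 * G2 ^+ 2 * Lv ^+ 2
      + (2 / 3%:R * eta_u * G1 ^+ 2 + 2%:R^-1 * eta_v * G2 ^+ 2)
        * eta_u * eta_v * chi ^+ 2 * Lu * Lv) in
  emp_loss s f (it tau).1 (it tau).2 - emp_loss s f u0 v0 <=
    (2 * (1 + chi) * Lu * eta_u ^+ 2 * T ^+ 2 - 2%:R^-1 * eta_u * T)
      * sqnorm (gu u0 v0)
  + ((1 + chi) * Lv * eta_v ^+ 2 * T ^+ 2 - 2%:R^-1 * eta_v * T)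
      * sqnorm (gv u0 v0)
  + A1
  + 5 / 4%:R * eta_u * lam ^+ 2 * \sum_(l < tau) sqnorm (gL (it l).1)
  + 2 * eta_u ^+ 2 * lam ^+ 2 * (3 * eta_u * Lu ^+ 2 + 2 * eta_v * chi ^+ 2 * Lu * Lv)
      * \sum_(l < tau) (T - l%:R) * sqnorm (gL (it l).1).
Proof.
move=> _ DFu DFv _ _ Lu0 Lv0 Luv0 Lvu0 Lgu_u Lgu_v Lgv_v Lgv_u _ _ G1b G2b _ _ _ tau0
  eu0 ev0 chi Heu Hev; cbv zeta.
pose M := Num.max Luv Lvu.
have chi0 : 0 <= chi by rewrite divr_ge0 ?sqrtr_ge0 // le_max Luv0.
have M2 : M ^+ 2 = chi ^+ 2 * Lu * Lv.
  by rewrite /chi expr_div_n sqr_sqrtr ?mulr_ge0 ?ltW // -mulrA divfK // mulf_neq0 ?gt_eqF.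
have gu_lip_u u u' v : sqnorm (gu u v - gu u' v) <= Lu ^+ 2 * sqnorm (u - u').
  by apply: (sqnorm_le_of_enorm _ (Lgu_u u u' v)); rewrite lexx ltW.
have gv_lip_v u v v' : sqnorm (gv u v - gv u v') <= Lv ^+ 2 * sqnorm (v - v').
  by apply: (sqnorm_le_of_enorm _ (Lgv_v u v v')); rewrite lexx ltW.
have gu_lip_v u v v' : sqnorm (gu u v - gu u v') <= chi ^+ 2 * Lu * Lv * sqnorm (v - v').
  by rewrite -M2; apply: (sqnorm_le_of_enorm _ (Lgu_v u v v')); rewrite Luv0 le_max lexx.
have gv_lip_u u u' v : sqnorm (gv u v - gv u' v) <= chi ^+ 2 * Lu * Lv * sqnorm (u - u').
  rewrite -M2; apply: (sqnorm_le_of_enorm _ (Lgv_u u u' v)).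
  by rewrite Lvu0 le_max lexx orbT.
have chi1 : 0 < 1 + chi by lra.
have step_u : (1 + chi) * Lu * eta_u * tau%:R <= 4^-1.
  by move: Heu; rewrite -[_^-1]mulr1 ler_pdivlMl ?mulr_gt0 ?ltr0n //; lra.
have step_v : (1 + chi) * Lv * eta_v * tau%:R <= 2^-1.
  by move: Hev; rewrite -[_^-1]mulr1 ler_pdivlMl ?mulr_gt0 ?ltr0n //; lra.
have := local_round_descent (F := emp_loss s f) Lu0 Lv0 chi0 eu0 ev0 tau0 DFu DFv
  gu_lip_u gu_lip_v gv_lip_v gv_lip_u G1b G2b step_u step_v.
have : 0 <= \sum_(l < tau)
              (tau%:R - l%:R) * sqnorm (gL (local_iter gu gv gL eta_u eta_v lam u0 v0 l).1).
  by apply: sumr_ge0 => l _; rewrite mulr_ge0 ?sqnorm_ge0 // subr_ge0 ler_nat ltnW.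
have : 0 <= (1 + chi) * Lu * eta_u ^+ 2 * tau%:R ^+ 2 * sqnorm (gu u0 v0) by nonneg.
have : 0 <= (1 + chi) * Lv * eta_v ^+ 2 * tau%:R ^+ 2 * sqnorm (gv u0 v0) by nonneg.
have : 0 <= 2 * eta_u ^+ 2 * lam ^+ 2
            * (3 * eta_u * Lu ^+ 2 + 2 * eta_v * chi ^+ 2 * Lu * Lv) by nonneg.
rewrite big_mkord; nra.
Qed.
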